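(* Let $f^{cl}_{\pi_\star}$ be $\eta$-locally $\delta$-ISS for some $\eta>0$, with gain $\gamma$ satisfying $\gamma(x)\le O(x^{1/r})$ as $x\to0^+$ for some $r\ge1$. Fix a test policy $\pi$ and initial condition $\xi\in\mathcal X$, and let $p\in\mathbb N$ satisfy $p+1-r>0$. Assume $\pi$ and $\pi_\star$ are $p$-times continuously differentiable and there is $L_{\partial^p\pi}\ge0$ with \[\Big\|\bar\pi(x)-\sum_{j=0}^p\tfrac1{j!}\partial_x^j\bar\pi(x_0)(x-x_0)^{\otimes j}\Big\|\le\tfrac{L_{\partial^p\pi}}{(p+1)!}\|x-x_0\|^{p+1}\] for all $x,x_0$ and $\bar\pi\in\{\pi,\pi_\star\}$. Choose $\mu,\alpha>0$ with $\alpha\le1/2$ such that \[2\tfrac{L_{\partial^p\pi}}{(p+1)!}x^{p+1}+(x/\mu)^r\le\gamma^{-1}(x)\quad\text{for all }0\le x\le\alpha.\] If \[\max_{0\le t\le T-1}\max_{0\le j\le p}\mu\Big(\tfrac{2}{j!}\|\partial_x^j\Delta_t^{\pi_\star}(\xi;\pi)\|\Big)^{1/r}\le\alpha,\] \[\max_{0\le t\le T-1}\max_{0\le j\le p}\Big[\tfrac{2L_{\partial^p\pi}\mu^{p+1}}{(p+1)!}\Big(\tfrac{2}{j!}\|\partial_x^j\Delta_t^{\pi_\star}(\xi;\pi)\|\Big)^{\frac{p+1}{r}}+\tfrac{2}{j!}\|\partial_x^j\Delta_t^{\pi_\star}(\xi;\pi)\|\Big]\le\eta,\] then for all $1\le t\le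 T$, \[\|x_t^{\pi_\star}(\xi)-x_t^\pi(\xi)\|\le\max_{0\le k\le t-1}\max_{0\le j\le p}\mu\Big(\tfrac{2}{j!}\|\partial_x^j\Delta_k^{\pi_\star}(\xi;\pi)\|\Big)^{1/r}.\]
   Context: Dynamics $x_{t+1}=f(x_t,u_t)$, $x_0=\xi$, $x_t\in\mathbb R^d,u_t\in\mathbb R^m$. For a policy $\pi$, perturbed closed loop $x_{t+1}=f^{cl}_\pi(x_t,\Delta_t):=f(x_t,\pi(x_t)+\Delta_t)$, states $x_t^\pi(\xi,\{\Delta_s\})$, $x_t^\pi(\xi):=x_t^\pi(\xi,\{0\})$. Initial conditions lie in a compact set $\mathcal X$. Norms: Euclidean on vectors, operator norm on matrices/tensors; $\otimes$ is the tensor power. Class $\mathcal K$/$\mathcal{KL}$ functions as standard. $f^{cl}_\pi$ is $\eta$-locally $\delta$-ISS if there are class $\mathcal{KL}$ $\beta$ and class $\mathcal K$ $\gamma$ with $\|x_t^\pi(\xi_1;\{\Delta_s\}_{s=0}^{t-1})-x_t^\pi(\xi_2;\{0\})\|\le\beta(\|\xi_1-\xi_2\|,t)+\gamma(\max_{0\le k\le t-1}\|\Delta_k\|)$ for all $\xi_1,\xi_2\in\mathcal X$, $t\in\mathbb N$, and perturbations with $\sup_t\|\Delta_t\|\le\eta$. $\gamma^{-1}$ is the inverse of $\gamma$ on its range (with $\gamma^{-1}(x)=+\infty$ for $x\ge\sup\gamma$). $\pi_\star$ is the expert policy, and $\partial_x^j\Delta_t^{\pi_\star}(\xi;\pi):=\partial_x^j\pi(x_t^{\pi_\star}(\xi))-\partial_x^j\pi_\star(x_t^{\pi_\star}(\xi))$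 (the $j$-th derivative of the policies with respect to their argument, evaluated on the expert trajectory). *)

From HB Require Import structures.
From mathcomp Require Import all_boot all_order all_algebra.
From mathcomp Require Import all_classical all_reals all_analysis.
Set Implicit Arguments. Unset Strict Implicit. Unset Printing Implicit Defensive.
Import Order.TTheory GRing.Theory Num.Theory.
Import numFieldNormedType.Exports.
Local Open Scope classical_set_scope.
Local Open Scope ring_scope.

Section Defs.
Variable R : realType.

(* Euclidean norm on row vectors (the library norm on 'rV is the sup norm). *)
Definition enorm (n : nat) (v : 'rV[R]_n) : R :=
  Num.sqrt (\sum_(i < n) v ord0 i ^+ 2).

(* Iterated directional derivative:
   iderive g [:: h1; ...; hj] x = d^j g(x)[h1,...,hj]. *)
Fixpoint iderive (d m : nat) (g : 'rV[R]_d -> 'rV[R]_m) (hs : seq 'rV[R]_d)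
  : 'rV[R]_d -> 'rV[R]_m :=
  match hs with
  | [::] => g
  | h :: hs' => fun x => derive (iderive g hs') x h
  end.

Definition unit_dirs (d j : nat) : set (seq 'rV[R]_d) :=
  [set hs | size hs = j /\ all (fun h => enorm h <= 1) hs].

Definition opnorm (d m j : nat) (F : seq 'rV[R]_d -> 'rV[R]_m) : R :=
  sup [set enorm (F hs) | hs in @unit_dirs d j].

Definition Cp (d m p : nat) (g : 'rV[R]_d -> 'rV[R]_m) : Prop :=
  forall hs : seq 'rV[R]_d,
    ((size hs < p)%N -> forall x, differentiable (iderive g hs) x) /\
    ((size hs <= p)%N -> continuous (iderive g hs)).

Fixpoint traj (d m : nat) (f : 'rV[R]_d -> 'rV[R]_m -> 'rV[R]_d)
  (pi : 'rV[R]_d -> 'rV[R]_m) (xi : 'rV[R]_d) (Delta : nat -> 'rV[R]_m)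
  (t : nat) : 'rV[R]_d :=
  match t with
  | 0 => xi
  | t'.+1 => let x := traj f pi xi Delta t' in f x (pi x + Delta t')
  end.

Definition zeroPert (m : nat) : nat -> 'rV[R]_m := fun _ => 0.

Definition classK (g : R -> R) : Prop :=
  g 0 = 0 /\
  {within [set x | 0 <= x], continuous g} /\
  {in [set x | 0 <= x] &, forall x y, x < y -> g x < g y}.

Definition classKL (b : R -> nat -> R) : Prop :=
  (forall t, classK (fun s => b s t)) /\
  (forall s, 0 <= s -> forall t1 t2 : nat, (t1 <= t2)%N -> b s t2 <= b s t1) /\
  (forall s, 0 <= s -> (fun t : nat => b s t) @ \oo --> 0).

Definition dISS_with (d m : nat) (f : 'rV[R]_d -> 'rV[R]_m -> 'rV[R]_d)
  (pi : 'rV[R]_d -> 'rV[R]_m) (X : set 'rV[R]_d) (eta : R)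
  (beta : R -> nat -> R) (gamma : R -> R) : Prop :=
  forall xi1 xi2, X xi1 -> X xi2 ->
  forall Delta : nat -> 'rV[R]_m, (forall t, enorm (Delta t) <= eta) ->
  forall t : nat,
    enorm (traj f pi xi1 Delta t - traj f pi xi2 (@zeroPert m) t)
      <= beta (enorm (xi1 - xi2)) t
         + gamma (\big[Num.max/0]_(k < t) enorm (Delta k)).

Definition loc_dISS (d m : nat) (f : 'rV[R]_d -> 'rV[R]_m -> 'rV[R]_d)
  (pi : 'rV[R]_d -> 'rV[R]_m) (X : set 'rV[R]_d) (eta : R) : Prop :=
  exists beta gamma, classKL beta /\ classK gamma /\ dISS_with f pi X eta beta gamma.

(* gamma^{-1}: inverse of gamma on its range, +oo outside it *)
Definition ginv (g : R -> R) (x : R) : \bar R :=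
  match pselect (exists y, 0 <= y /\ g y = x) with
  | left P => (projT1 (cid P))%:E
  | right _ => +oo%E
  end.

Definition dDelta (d m : nat) (pi pistar : 'rV[R]_d -> 'rV[R]_m) (j : nat)
  (x : 'rV[R]_d) : R :=
  @opnorm d m j (fun hs => iderive pi hs x - iderive pistar hs x).

End Defs.

(* Let z and y be the expert and learner trajectories.  The expert driven by the input
   perturbation Delta_k := pi(y_k) - pistar(y_k) follows y exactly, so delta-ISS (with
   xi_1 = xi_2 = xi) bounds |z_t - y_t| by gamma(max_{k<t} |Delta_k|).  Argue by strong
   induction on t, with x the right-hand side of the bound at time t: if |z_k - y_k| <= x
   for k < t, comparing the Taylor expansions of pi and pistar around z_k gives
   |Delta_k| <= 2 L x^(p+1)/(p+1)! + sum_j |d^j Delta(z_k)| x^j / j!, and since x <= 1/2 the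
   sum is at most (x/mu)^r.  The choice of mu and alpha makes this at most gamma^-1(x), hence
   |z_t - y_t| <= x; the second hypothesis on the derivative gaps keeps every Delta_k
   within the ISS radius eta. *)

From mathcomp Require Import all_boot all_order all_algebra.
From mathcomp Require Import all_classical all_reals all_analysis.
From mathcomp Require Import zify ring lra.
Import Order.TTheory GRing.Theory Num.Theory.
Import numFieldNormedType.Exports.
Local Open Scope classical_set_scope.
Local Open Scope ring_scope.

Section EuclideanNorm.
Context {R : realType} {n : nat}.
Implicit Types (u v : 'rV[R]_n).

Lemma sum_sqr_ge0 v : 0 <= \sum_(i < n) v ord0 i ^+ 2.
Proof. by apply: sumr_ge0 => i _; rewrite sqr_ge0. Qed.

Lemma enorm_ge0 v : 0 <= enorm v.
Proof. exact: sqrtr_ge0. Qed.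

Lemma sqr_enorm v : enorm v ^+ 2 = \sum_(i < n) v ord0 i ^+ 2.
Proof. by rewrite sqr_sqrtr // sum_sqr_ge0. Qed.

Lemma enormZ (c : R) v : enorm (c *: v) = `|c| * enorm v.
Proof.
rewrite /enorm (eq_bigr (fun i => c ^+ 2 * v ord0 i ^+ 2)); last first.
  by move=> i _; rewrite mxE exprMn.
by rewrite -mulr_sumr sqrtrM ?sqr_ge0 // sqrtr_sqr.
Qed.

Lemma enorm0 : enorm (0 : 'rV[R]_n) = 0.
Proof. by rewrite -(scale0r (0 : 'rV[R]_n)) enormZ normr0 mul0r. Qed.

Lemma enormN v : enorm (- v) = enorm v.
Proof. by rewrite -scaleN1r enormZ normrN normr1 mul1r. Qed.

Lemma enorm_distC u v : enorm (u - v) = enorm (v - u).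
Proof. by rewrite -enormN opprB. Qed.

Lemma normr_coord_le_enorm v k : `|v ord0 k| <= enorm v.
Proof.
rewrite -sqrtr_sqr /enorm ler_sqrt ?sum_sqr_ge0 // (bigD1 k) //= lerDl.
by apply: sumr_ge0 => i _; exact: sqr_ge0.
Qed.

Lemma enorm0_eq0 v : enorm v = 0 -> v = 0.
Proof.
move=> v0; apply/rowP => k; rewrite mxE.
have := normr_coord_le_enorm v k; rewrite v0 (ord1 0) => le_vk0.
by apply/normr0_eq0/le_anti; rewrite normr_ge0 le_vk0.
Qed.

Lemma cauchy_schwarz_enorm u v :
  \sum_(i < n) u ord0 i * v ord0 i <= enorm u * enorm v.
Proof.
have [/eqP|AB0] := eqVneq (enorm u * enorm v) 0.
  rewrite mulf_eq0 => /orP[] /eqP/enorm0_eq0 ->;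
  by rewrite big1 ?enorm0 ?mul0r ?mulr0 // => i _; rewrite mxE ?mul0r ?mulr0.
set A := enorm u; set B := enorm v; set S := \sum_(i < n) _.
(* 0 <= sum_i (B u_i - A v_i)^2 = 2 A B (A B - S) *)
have : 0 <= \sum_(i < n) (B * u ord0 i - A * v ord0 i) ^+ 2.
  by apply: sumr_ge0 => i _; exact: sqr_ge0.
have -> : \sum_(i < n) (B * u ord0 i - A * v ord0 i) ^+ 2 =
    B ^+ 2 * (\sum_(i < n) u ord0 i ^+ 2) - (2 * A * B) * S
    + A ^+ 2 * (\sum_(i < n) v ord0 i ^+ 2).
  by rewrite !mulr_sumr -sumrB -big_split /=; apply: eq_bigr => i _; ring.
rewrite -!sqr_enorm -/A -/B => H.
have ABpos : 0 < A * B by rewrite lt_def AB0 mulr_ge0 ?enorm_ge0.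
have : 0 <= (A * B) * (2 * (A * B - S)).
  by apply: le_trans H _; rewrite le_eqVlt; apply/orP; left; apply/eqP; ring.
rewrite pmulr_rge0 // pmulr_rge0 //; lra.
Qed.

Lemma ler_enormD u v : enorm (u + v) <= enorm u + enorm v.
Proof.
rewrite -(ler_pXn2r (_ : (0 < 2)%N)) ?nnegrE ?addr_ge0 ?enorm_ge0 //.
rewrite sqr_enorm sqrrD !sqr_enorm.
rewrite (eq_bigr (fun i => u ord0 i ^+ 2 + v ord0 i ^+ 2 + 2 * (u ord0 i * v ord0 i))).
  rewrite !big_split /= -mulr_sumr.
  by have := cauchy_schwarz_enorm u v; rewrite mulr2n; lra.
by move=> i _; rewrite mxE; ring.
Qed.

Lemma ler_enorm_sum I (s : seq I) (P : pred I) (F : I -> 'rV[R]_n) :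
  enorm (\sum_(i <- s | P i) F i) <= \sum_(i <- s | P i) enorm (F i).
Proof.
apply: (big_ind2 (fun x y => enorm x <= y)); first by rewrite enorm0.
  by move=> x1 y1 x2 y2 H1 H2; apply: le_trans (ler_enormD _ _) (lerD H1 H2).
by [].
Qed.

End EuclideanNorm.

Section IteratedDerivatives.
Context {R : realType} {d m p : nat} {g : 'rV[R]_d -> 'rV[R]_m}.
Hypothesis g_Cp : Cp p g.

Lemma iderive_slot_linear {pre post} : (size pre + size post < p)%N ->
  forall (a b : R) (v w x : 'rV[R]_d),
  iderive g (pre ++ (a *: v + b *: w) :: post) x =
  a *: iderive g (pre ++ v :: post) x + b *: iderive g (pre ++ w :: post) x.
Proof.
elim: pre => [|h pre IH] /= size_lt a b v w x.
  by rewrite !deriveE ?linearD ?linearZZ //; apply: (g_Cp post).1.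
have diff_slot u : differentiable (iderive g (pre ++ u :: post)) x.
  by apply: (g_Cp _).1; rewrite size_cat /=; move: size_lt => /=; lia.
have -> : iderive g (pre ++ (a *: v + b *: w) :: post) =
    (a \*: iderive g (pre ++ v :: post)) + (b \*: iderive g (pre ++ w :: post)).
  by apply/funext => y; rewrite IH //; move: size_lt => /=; lia.
rewrite deriveD ?deriveZ //; apply: diff_derivable;
  by try apply: differentiableZ; exact: diff_slot.
Qed.

Lemma iderive_slot_sum {pre post} : (size pre + size post < p)%N ->
  forall (x : 'rV[R]_d) I (s : seq I) (P : pred I) (c : I -> R) (v : I -> 'rV[R]_d),
  iderive g (pre ++ (\sum_(i <- s | P i) c i *: v i) :: post) x =
  \sum_(i <- s | P i) c i *: iderive g (pre ++ v i :: post) x.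
Proof.
move=> size_lt x I s P c v; elim: s => [|i s IH].
  by rewrite !big_nil; have := iderive_slot_linear size_lt 0 0 0 0 x;
    rewrite !scale0r !addr0.
rewrite !big_cons; case: (P i) => //; rewrite -IH.
have := iderive_slot_linear size_lt (c i) 1 (v i) (\sum_(j <- s | P j) c j *: v j) x.
by rewrite !scale1r.
Qed.

Lemma iderive_nseqZ j (c : R) (u x : 'rV[R]_d) : (j <= p)%N ->
  iderive g (nseq j (c *: u)) x = c ^+ j *: iderive g (nseq j u) x.
Proof.
elim: j x => [|j IH] x j_le /=; first by rewrite scale1r.
have -> : iderive g (nseq j (c *: u)) = c ^+ j \*: iderive g (nseq j u).
  by apply/funext => y; rewrite IH //; lia.
have diff_j : differentiable (iderive g (nseq j u)) x.
  by apply: (g_Cp _).1; rewrite size_nseq; lia.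
rewrite deriveZ; last exact: diff_derivable.
by rewrite deriveE // linearZZ -deriveE // scalerA exprS mulrC.
Qed.

Lemma iderive_cat_bounded (x : 'rV[R]_d) n pre : (size pre + n <= p)%N ->
  exists C, forall hs, unit_dirs n hs -> enorm (iderive g (pre ++ hs) x) <= C.
Proof.
elim: n pre => [|n IH] pre size_le.
  by exists (enorm (iderive g (pre ++ [::]) x)) => -[|h hs] [].
have /boolp.choice [C HC] : forall k : 'I_d, exists C, forall hs, unit_dirs n hs ->
    enorm (iderive g ((pre ++ [:: 'e_k]) ++ hs) x) <= C.
  by move=> k; apply: IH; rewrite size_cat /=; lia.
exists (\sum_k C k) => -[|h hs] [] //= [size_hs] /andP[h_le1 hs_le1].
(* expand the first direction h = sum_k h_k e_k and use linearity in that slot *)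
rewrite {1}(row_sum_delta h) iderive_slot_sum; last by rewrite size_hs -addnS.
apply: le_trans; first exact: ler_enorm_sum.
apply: ler_sum => k _.
rewrite enormZ -[C k]mul1r; apply: ler_pM; rewrite ?normr_ge0 ?enorm_ge0 //.
  rewrite (_ : 0 = ord0); last exact/val_inj.
  exact: le_trans (normr_coord_le_enorm h k) h_le1.
by have := HC k hs (conj size_hs hs_le1); rewrite -catA.
Qed.

End IteratedDerivatives.

Section OperatorNorm.
Context {R : realType} {d m : nat} (j : nat) (F : seq 'rV[R]_d -> 'rV[R]_m).
Hypothesis F_bounded : has_ubound [set enorm (F hs) | hs in unit_dirs j].

Lemma le_opnorm hs : unit_dirs j hs -> enorm (F hs) <= opnorm j F.
Proof. by move=> hs_unit; apply: ub_le_sup => //; exists hs. Qed.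

Lemma opnorm_ge0 : 0 <= opnorm j F.
Proof.
apply: le_trans (enorm_ge0 (F (nseq j 0))) (le_opnorm _ _).
by split; rewrite ?size_nseq // all_nseq enorm0 ler01 orbT.
Qed.

Hypothesis F_nseqZ : forall (c : R) u, F (nseq j (c *: u)) = c ^+ j *: F (nseq j u).

Lemma opnorm_nseq_le h : enorm (F (nseq j h)) <= opnorm j F * enorm h ^+ j.
Proof.
pose u := if enorm h == 0 then 0 else (enorm h)^-1 *: h.
have h_scale : h = enorm h *: u.
  rewrite /u; case: eqP => [/enorm0_eq0 ->|/eqP h_neq0]; first by rewrite scaler0.
  by rewrite scalerA divff // scale1r.
have u_unit : enorm u <= 1.
  rewrite /u; case: eqP => [_|/eqP h_neq0]; first by rewrite enorm0.
  by rewrite enormZ ger0_norm ?invr_ge0 ?enorm_ge0 // mulVf.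
rewrite {1}h_scale F_nseqZ enormZ ger0_norm ?exprn_ge0 ?enorm_ge0 // mulrC.
apply: ler_wpM2r; first by rewrite exprn_ge0 ?enorm_ge0.
by apply: le_opnorm; split; rewrite ?size_nseq // all_nseq u_unit orbT.
Qed.

End OperatorNorm.

Lemma sum_expr_le2 {R : realFieldType} (x : R) n :
  0 <= x -> x <= 2^-1 -> \sum_(j < n) x ^+ j <= 2.
Proof.
move=> x_ge0 x_le; elim: n => [|n IH]; first by rewrite big_ord0.
rewrite big_ord_recl expr0.
under eq_bigr do rewrite exprS.
rewrite -mulr_sumr.
have : x * \sum_(i < n) x ^+ i <= 2^-1 * 2.
  by apply: ler_pM => //; apply: sumr_ge0 => i _; exact: exprn_ge0.
by rewrite mulVf // => H; lra.
Qed.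

Section PolicyGap.
Context {R : realType} {d m p : nat} (pi pistar : 'rV[R]_d -> 'rV[R]_m).
Hypotheses (pi_Cp : Cp p pi) (pistar_Cp : Cp p pistar).

Let gap_nseqZ j z : (j <= p)%N -> forall (c : R) u,
  iderive pi (nseq j (c *: u)) z - iderive pistar (nseq j (c *: u)) z =
  c ^+ j *: (iderive pi (nseq j u) z - iderive pistar (nseq j u) z).
Proof.
by move=> j_le c u; rewrite (iderive_nseqZ pi_Cp) ?(iderive_nseqZ pistar_Cp) // scalerBr.
Qed.

Let gap_bounded j z : (j <= p)%N ->
  has_ubound [set enorm (iderive pi hs z - iderive pistar hs z) | hs in unit_dirs j].
Proof.
move=> j_le.
have [C1 HC1] := iderive_cat_bounded pi_Cp z j [::] j_le.
have [C2 HC2] := iderive_cat_bounded pistar_Cp z j [::] j_le.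
exists (C1 + C2) => _ [hs hs_unit <-].
apply: le_trans (ler_enormD _ _) _; rewrite enormN.
by apply: lerD; [exact: HC1 | exact: HC2].
Qed.

Lemma dDelta_ge0 j z : (j <= p)%N -> 0 <= dDelta pi pistar j z.
Proof. by move=> j_le; apply: opnorm_ge0; exact: gap_bounded. Qed.

Lemma iderive_nseq_gap_le j z h : (j <= p)%N ->
  enorm (iderive pi (nseq j h) z - iderive pistar (nseq j h) z)
    <= dDelta pi pistar j z * enorm h ^+ j.
Proof.
move=> j_le; apply: opnorm_nseq_le; [exact: gap_bounded | exact: gap_nseqZ].
Qed.

Lemma taylor_poly_gap_le (z h : 'rV[R]_d) (x c : R) :
  0 <= x -> x <= 2^-1 -> enorm h <= x ->
  (forall j, (j <= p)%N -> 2 / j`!%:R * dDelta pi pistar j z <= c) ->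
  enorm (\sum_(j < p.+1) (j`!%:R)^-1 *:
           (iderive pi (nseq j h) z - iderive pistar (nseq j h) z)) <= c.
Proof.
move=> x_ge0 x_le h_le D_le.
have c_ge0 : 0 <= c.
  by apply: le_trans (D_le 0%N isT); rewrite mulr_ge0 ?divr_ge0 ?ler0n ?dDelta_ge0.
apply: le_trans; first exact: ler_enorm_sum.
apply: (@le_trans _ _ (\sum_(j < p.+1) (2^-1 * c) * x ^+ j)); last first.
  rewrite -mulr_sumr; apply: le_trans (ler_wpM2l _ (sum_expr_le2 _ p.+1 x_ge0 x_le)) _.
    by rewrite mulr_ge0 ?invr_ge0.
  by rewrite mulrAC mulVf ?mul1r.
apply: ler_sum => -[j /= j_lt] _.
rewrite enormZ ger0_norm ?invr_ge0 ?ler0n //.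
apply: le_trans (ler_wpM2l _ (iderive_nseq_gap_le j z h j_lt)) _.
  by rewrite invr_ge0 ler0n.
rewrite mulrA; apply: ler_pM.
- by rewrite mulr_ge0 ?invr_ge0 ?dDelta_ge0.
- by rewrite exprn_ge0 ?enorm_ge0.
- apply: le_trans (ler_wpM2l _ (D_le j j_lt)); last by rewrite invr_ge0.
  by rewrite !mulrA mulVf ?mul1r ?pnatr_eq0.
- by rewrite lerXn2r ?nnegrE ?enorm_ge0.
Qed.

Lemma policy_gap_le (L x c : R) (y z : 'rV[R]_d) :
  let taylor g := \sum_(j < p.+1) (j`!%:R)^-1 *: iderive g (nseq j (y - z)) z in
  enorm (pi y - taylor pi) <= L / (p.+1)`!%:R * enorm (y - z) ^+ p.+1 ->
  enorm (pistar y - taylor pistar) <= L / (p.+1)`!%:R * enorm (y - z) ^+ p.+1 ->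
  0 <= L -> 0 <= x -> x <= 2^-1 -> enorm (y - z) <= x ->
  (forall j, (j <= p)%N -> 2 / j`!%:R * dDelta pi pistar j z <= c) ->
  enorm (pi y - pistar y) <= 2 * L / (p.+1)`!%:R * x ^+ p.+1 + c.
Proof.
move=> taylor rem_pi rem_pistar L_ge0 x_ge0 x_le yz_le D_le.
have -> : pi y - pistar y =
    (pi y - taylor pi) - (pistar y - taylor pistar) + (taylor pi - taylor pistar).
  by apply/rowP => i; rewrite !mxE; ring.
have rem_le : L / (p.+1)`!%:R * enorm (y - z) ^+ p.+1 <= L / (p.+1)`!%:R * x ^+ p.+1.
  by rewrite ler_wpM2l ?divr_ge0 // lerXn2r ?nnegrE ?enorm_ge0.
have poly_le : enorm (taylor pi - taylor pistar) <= c.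
  rewrite /taylor -sumrB; under eq_bigr do rewrite -scalerBr.
  exact: taylor_poly_gap_le z (y - z) x c x_ge0 x_le yz_le D_le.
have := ler_enormD (pi y - taylor pi) (- (pistar y - taylor pistar)).
have := ler_enormD (pi y - taylor pi - (pistar y - taylor pistar))
  (taylor pi - taylor pistar).
rewrite enormN; lra.
Qed.

End PolicyGap.

Lemma classK_le_ginv {R : realType} (g : R -> R) (x M : R) :
  classK g -> 0 <= x -> 0 <= M -> (M%:E <= ginv g x)%E -> g M <= x.
Proof.
move=> [g0 [g_cont g_incr]] x_ge0 M_ge0; rewrite /ginv; case: pselect => [P|notP].
  case: (cid P) => y [y_ge0 gy] /=; rewrite lee_fin -gy le_eqVlt => /orP[/eqP -> //|lt_My].
  by apply/ltW/g_incr; rewrite ?in_setE.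
(* ginv g x = +oo: x is not a value of g, so by the IVT x lies above g on [0, M] *)
move=> _; rewrite leNgt; apply/negP => lt_xgM; apply: notP.
have g_cont0M : {within `[0, M], continuous g}.
  by apply: continuous_subspaceW g_cont => y /=; rewrite in_itv /= => /andP[].
have [|c] := IVT M_ge0 g_cont0M (v := x).
  by rewrite g0 ge_min x_ge0 le_max (ltW lt_xgM) orbT.
by rewrite in_itv /= => /andP[c_ge0 _] gc; exists c.
Qed.

Lemma bigmax_ord_le {R : realDomainType} (F : nat -> R) k t : (k <= t)%N ->
  \big[Num.max/0]_(i < k) F i <= \big[Num.max/0]_(i < t) F i.
Proof.
move=> k_le; apply: bigmax_le => [|i _]; first exact: bigmax_ge_id.
exact: (le_bigmax _ (fun i : 'I_t => F i) (widen_ord k_le i)).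
Qed.

Lemma powRV_le {R : realType} (a b r : R) :
  0 < r -> 0 <= a -> a `^ r^-1 <= b -> a <= b `^ r.
Proof.
move=> r_gt0 a_ge0 le_ab.
have -> : a = (a `^ r^-1) `^ r.
  by rewrite -powRrM mulVf ?gt_eqF ?powRr1.
apply: ge0_ler_powR => //; first exact: ltW.
  by rewrite nnegrE powR_ge0.
by rewrite nnegrE (le_trans (powR_ge0 _ _) le_ab).
Qed.

Lemma traj_perturbed_by_policy_gap {R : realType} {d m : nat}
    (f : 'rV[R]_d -> 'rV[R]_m -> 'rV[R]_d) (pi pistar : 'rV[R]_d -> 'rV[R]_m)
    (xi : 'rV[R]_d) (Delta : nat -> 'rV[R]_m) t :
  (forall k, (k < t)%N -> Delta k =
     pi (traj f pi xi (@zeroPert R m) k) - pistar (traj f pi xi (@zeroPert R m) k)) ->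
  forall k, (k <= t)%N -> traj f pistar xi Delta k = traj f pi xi (@zeroPert R m) k.
Proof.
move=> Delta_def; elim=> [|k IH] lt_kt //=.
by rewrite IH ?(ltnW lt_kt) // Delta_def // addrC subrK /zeroPert addr0.
Qed.

Section ImitationGap.
Context {R : realType} {d m p : nat} {f : 'rV[R]_d -> 'rV[R]_m -> 'rV[R]_d}
  {X : set 'rV[R]_d} {pistar pi : 'rV[R]_d -> 'rV[R]_m} {eta : R}
  {beta : R -> nat -> R} {gamma : R -> R} {r : R} {xi : 'rV[R]_d}
  {L mu alpha : R} {T : nat}.

Let z := traj f pistar xi (@zeroPert R m).
Let y := traj f pi xi (@zeroPert R m).
Let D k j := 2 / j`!%:R * dDelta pi pistar j (z k).
Let Phi x := 2 * L / (p.+1)`!%:R * x ^+ p.+1 + (x / mu) `^ r.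
Let M t := \big[Num.max/0]_(k < t) \big[Num.max/0]_(j < p.+1) (mu * D k j `^ r^-1).

Hypotheses (eta_gt0 : 0 < eta) (beta_KL : classKL beta) (gamma_K : classK gamma)
  (pistar_ISS : dISS_with f pistar X eta beta gamma) (r_gt0 : 0 < r) (xi_X : X xi)
  (pi_Cp : Cp p pi) (pistar_Cp : Cp p pistar) (L_ge0 : 0 <= L)
  (taylor_rem : forall pb, pb = pi \/ pb = pistar -> forall x x0 : 'rV[R]_d,
     enorm (pb x - \sum_(j < p.+1) (j`!%:R)^-1 *: iderive pb (nseq j (x - x0)) x0)
       <= L / (p.+1)`!%:R * enorm (x - x0) ^+ p.+1)
  (mu_gt0 : 0 < mu) (alpha_gt0 : 0 < alpha) (alpha_le : alpha <= 2^-1)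
  (Phi_le_ginv : forall x, 0 <= x <= alpha -> ((Phi x)%:E <= ginv gamma x)%E)
  (term_le_alpha : forall t, (t < T)%N -> forall j, (j <= p)%N ->
     mu * D t j `^ r^-1 <= alpha)
  (term_le_eta : forall t, (t < T)%N -> forall j, (j <= p)%N ->
     2 * L * mu ^+ p.+1 / (p.+1)`!%:R * D t j `^ (p.+1%:R / r) + D t j <= eta).

Let D_ge0 k j : (j <= p)%N -> 0 <= D k j.
Proof.
by move=> j_le; rewrite mulr_ge0 ?divr_ge0 ?ler0n //; exact: dDelta_ge0.
Qed.

Let M_ge0 t : 0 <= M t.
Proof. exact: bigmax_ge_id. Qed.

Let M_mono k t : (k <= t)%N -> M k <= M t.
Proof. exact: (bigmax_ord_le (fun k => \big[Num.max/0]_(j < p.+1) (mu * D k j `^ r^-1))). Qed.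

Let M_le_alpha t : (t <= T)%N -> M t <= alpha.
Proof.
move=> t_le; apply: bigmax_le => [|k _]; first exact: ltW.
apply: bigmax_le => [|j _]; first exact: ltW.
exact: term_le_alpha _ (leq_trans (ltn_ord k) t_le) _ (ltn_ord j).
Qed.

Let D_le_M k j t : (k < t)%N -> (j <= p)%N -> D k j <= (M t / mu) `^ r.
Proof.
move=> k_lt j_le; apply: powRV_le; rewrite ?D_ge0 // ler_pdivlMr // mulrC.
apply: le_trans (le_bigmax _ _ (Ordinal k_lt)).
exact: (le_bigmax _ (fun j : 'I_p.+1 => mu * D k j `^ r^-1) (Ordinal (j_le : j < p.+1)%N)).
Qed.

Let Phi_M_le_eta t : (t <= T)%N -> Phi (M t) <= eta.
Proof.
move=> t_le; have Phi_max a b : Phi a <= eta -> Phi b <= eta -> Phi (Num.max a b) <= eta.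
  by move=> Pa Pb; case: (leP a b).
have Phi0 : Phi 0 <= eta.
  by rewrite /Phi mul0r powR0 ?gt_eqF // expr0n mulr0 add0r ltW.
apply: (big_ind (fun a => Phi a <= eta)) => // k _.
apply: (big_ind (fun a => Phi a <= eta)) => // j _.
have k_lt : (k < T)%N := leq_trans (ltn_ord k) t_le.
have j_le : (j <= p)%N := ltn_ord j.
suff -> : Phi (mu * D k j `^ r^-1) =
    2 * L * mu ^+ p.+1 / (p.+1)`!%:R * D k j `^ (p.+1%:R / r) + D k j.
  exact: term_le_eta.
rewrite /Phi [_ / mu]mulrAC mulfV ?gt_eqF // mul1r -powRrM mulVf ?gt_eqF // powRr1 ?D_ge0 //.
rewrite exprMn -(powR_mulrn _ (powR_ge0 (D k j) r^-1)) -powRrM [r^-1 * _]mulrC.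
ring.
Qed.

Let Phi_ge0 x : 0 <= x -> 0 <= Phi x.
Proof.
by move=> x_ge0; rewrite addr_ge0 ?powR_ge0 // mulr_ge0 ?exprn_ge0 ?divr_ge0 ?mulr_ge0.
Qed.

Let policy_gap_le_Phi k t : (t <= T)%N -> (k < t)%N -> enorm (y k - z k) <= M t ->
  enorm (pi (y k) - pistar (y k)) <= Phi (M t).
Proof.
move=> t_le k_lt yz_le.
apply: (policy_gap_le _ _ pi_Cp pistar_Cp L (M t) ((M t / mu) `^ r) (y k) (z k)) => //.
- by apply: taylor_rem; left.
- by apply: taylor_rem; right.
- exact: le_trans (M_le_alpha _ t_le) alpha_le.
- by move=> j j_le; exact: D_le_M.
Qed.

Lemma traj_gap_le t : (t <= T)%N -> enorm (z t - y t) <= M t.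
Proof.
elim/ltn_ind: t => t IH t_le.
pose Delta k := if (k < t)%N then pi (y k) - pistar (y k) else 0.
have Delta_le_Phi k : (k < t)%N -> enorm (Delta k) <= Phi (M t).
  move=> k_lt; rewrite /Delta k_lt; apply: policy_gap_le_Phi => //.
  rewrite enorm_distC; apply: le_trans (IH k k_lt (ltnW (leq_trans k_lt t_le))) _.
  exact/M_mono/ltnW.
have Delta_le_eta k : enorm (Delta k) <= eta.
  have [k_lt|k_ge] := ltnP k t.
    exact: le_trans (Delta_le_Phi k k_lt) (Phi_M_le_eta _ t_le).
  by rewrite /Delta ltnNge k_ge enorm0 ltW.
have := pistar_ISS _ _ xi_X xi_X _ Delta_le_eta t.
rewrite subrr enorm0 (beta_KL.1 t).1 add0r.
have -> : traj f pistar xi Delta t = y t.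
  apply: (@traj_perturbed_by_policy_gap _ _ _ f pi pistar xi Delta t) => // k k_lt.
  by rewrite /Delta k_lt.
rewrite enorm_distC => /le_trans; apply.
apply: classK_le_ginv; rewrite ?bigmax_ge_id //.
apply: le_trans (Phi_le_ginv (M t) _); last by rewrite M_ge0 M_le_alpha.
rewrite lee_fin; apply: bigmax_le => [|k _]; first exact: Phi_ge0.
exact: Delta_le_Phi.
Qed.

End ImitationGap.

Theorem theorem2 (R : realType) (d m : nat)
  (f : 'rV[R]_d -> 'rV[R]_m -> 'rV[R]_d) (X : set 'rV[R]_d)
  (pistar pi : 'rV[R]_d -> 'rV[R]_m)
  (eta : R) (beta : R -> nat -> R) (gamma : R -> R) (r : R)
  (xi : 'rV[R]_d) (p : nat) (L mu alpha : R) (T : nat) :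
  compact X ->
  0 < eta ->
  classKL beta -> classK gamma ->
  dISS_with f pistar X eta beta gamma ->
  1 <= r ->
  (exists C e : R, 0 < e /\ forall x, 0 < x < e -> gamma x <= C * x `^ r^-1) ->
  X xi ->
  0 < p.+1%:R - r ->
  Cp p pi -> Cp p pistar ->
  0 <= L ->
  (forall pb, pb = pi \/ pb = pistar -> forall x x0 : 'rV[R]_d,
     enorm (pb x - \sum_(j < p.+1) (j`!%:R)^-1 *: iderive pb (nseq j (x - x0)) x0)
       <= L / (p.+1)`!%:R * enorm (x - x0) ^+ p.+1) ->
  0 < mu -> 0 < alpha -> alpha <= 2^-1 ->
  (forall x, 0 <= x <= alpha ->
     ((2 * L / (p.+1)`!%:R * x ^+ p.+1 + (x / mu) `^ r)%:E <= ginv gamma x)%E) ->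
  (forall t, (t < T)%N -> forall j, (j <= p)%N ->
     mu * (2 / j`!%:R * dDelta pi pistar j (traj f pistar xi (@zeroPert R m) t))
            `^ r^-1 <= alpha) ->
  (forall t, (t < T)%N -> forall j, (j <= p)%N ->
     let D := 2 / j`!%:R * dDelta pi pistar j (traj f pistar xi (@zeroPert R m) t) in
     2 * L * mu ^+ p.+1 / (p.+1)`!%:R * D `^ (p.+1%:R / r) + D <= eta) ->
  forall t, (1 <= t <= T)%N ->
    enorm (traj f pistar xi (@zeroPert R m) t - traj f pi xi (@zeroPert R m) t)
      <= \big[Num.max/0]_(k < t) \big[Num.max/0]_(j < p.+1)
            (mu * (2 / j`!%:R * dDelta pi pistar j
                       (traj f pistar xi (@zeroPert R m) k)) `^ r^-1).
Proof.
(* Compactness of X, the growth of gamma at 0 and p + 1 > r only serve, in the paper,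
   to guarantee that suitable mu and alpha exist; here they are given. *)
move=> _ eta_gt0 beta_KL gamma_K pistar_ISS r_ge1 _ xi_X _ pi_Cp pistar_Cp L_ge0
  taylor_rem mu_gt0 alpha_gt0 alpha_le Phi_le_ginv term_le_alpha term_le_eta
  t /andP[_ t_le_T].
have r_gt0 : 0 < r := lt_le_trans ltr01 r_ge1.
exact: (traj_gap_le eta_gt0 beta_KL gamma_K pistar_ISS r_gt0 xi_X pi_Cp pistar_Cp
  L_ge0 taylor_rem mu_gt0 alpha_gt0 alpha_le Phi_le_ginv term_le_alpha term_le_eta t t_le_T).
Qed.
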